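(* Let $\Sigma=\{b\}$. There exists a 2R1CA over $\Sigma$ which accepts every input $b^{2^n}$ ($n\ge0$) with probability $1$ and rejects every other input $x\in\Sigma^*$ with probability $1$.
   Context: Let $\Gamma=\Sigma\cup\{\cent,\$\}$ with end-markers $\cent,\$\notin\Sigma$, $S=\{0,1\}$, $\mathrm{sign}(k)=0$ if $k=0$ and $1$ otherwise, and $\mu(\leftarrow)=-1,\mu(\downarrow)=0,\mu(\rightarrow)=+1$. 2Q1CA: $M=(Q,\Sigma,\delta,q_0,Q_{\rm acc},Q_{\rm rej})$ with finite $Q$, $q_0\in Q$, disjoint $Q_{\rm acc},Q_{\rm rej}\subset Q$, and $\delta:Q\times\Gamma\times S\times Q\times\{-1,0,+1\}\times\{\leftarrow,\downarrow,\rightarrow\}\to\mathbb{C}$ satisfying the well-formedness conditions below. For $\alpha,\beta\in\{-2,\dots,2\}$ let $W_{\alpha,\beta}(q_1,\sigma_1,s_1;q_2,\sigma_2,s_2)=\sum_{q'\in Q}\sum\overline{\delta(q_1,\sigma_1,s_1,q',c_1,d_1)}\,\delta(q_2,\sigma_2,s_2,q',c_2,d_2)$, inner sum over $(c_1,d_1),(c_2,d_2)$ with $c_2-c_1=\alpha$, $\mu(d_2)-\mu(d_1)=\beta$. Well-formedness: for all $q_1,q_2\in Q$, $\sigma,\sigma_1,\sigma_2\in\Gamma$, $s,s_1,s_2\in S$: (i) $W_{0,0}(q_1,\sigma,s;q_2,\sigma,s)=[q_1=q_2]$; (ii) $W_{0,\beta}(q_1,\sigma_1,s;q_2,\sigma_2,s)=0$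 for $\beta\in\{1,2\}$; (iii) $W_{\alpha,0}(q_1,\sigma,s_1;q_2,\sigma,s_2)=0$ for $\alpha\in\{1,2\}$; (iv) $W_{\alpha,\beta}(q_1,\sigma_1,s_1;q_2,\sigma_2,s_2)=0$ for $\alpha\in\{1,2\}$, $\beta\in\{-2,-1,1,2\}$. On input $x$ of length $n$ the circular tape holds $w_x=\cent x\$$ at positions $0,\dots,n+1$ (modulo $n+2$); configurations are $(q,a,b)\in Q\times\mathbb{Z}\times\{0,\dots,n+1\}$ and $U_x|q,a,b\rangle=\sum_{q',c,d}\delta(q,w_x(b),\mathrm{sign}(a),q',c,d)|q',a+c,b+\mu(d)\rangle$. Computation starts in $|q_0,0,0\rangle$; at each step $U_x$ is applied and then the state is measured w.r.t. the orthogonal decomposition into the spans of configurations whose state lies in $Q_{\rm acc}$, in $Q_{\rm rej}$, and in neither; outcomes ''accept''/''reject'' halt, otherwise the computation continues from the collapsed (renormalized) state. Acceptance (rejection) probability is the total probability of ever obtaining the outcome ''accept'' (''reject''). A 2R1CA is a 2Q1CA all of whose transition amplitudes lie in $\{0,1\}$. *)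

From HB Require Import structures.
From mathcomp Require Import all_boot all_order all_algebra.
From mathcomp Require Import complex.
From mathcomp Require Import all_classical all_reals all_analysis.
Set Implicit Arguments. Unset Strict Implicit. Unset Printing Implicit Defensive.
Import Order.TTheory GRing.Theory Num.Theory.
Local Open Scope ring_scope.

Inductive tapesym (Sigma : Type) := Cent | Dollar | Sym of Sigma.
Arguments Cent {Sigma}. Arguments Dollar {Sigma}.

Inductive cmove := CM | C0 | CP.
Definition cval (c : cmove) : int := match c with CM => -1 | C0 => 0 | CP => 1 end.
Definition cmoves : seq cmove := [:: CM; C0; CP].

Inductive hmove := HL | HN | HR.
Definition mu (d : hmove) : int := match d with HL => -1 | HN => 0 | HR => 1 end.
Definition hmoves : seq hmove := [:: HL; HN; HR].

(* sign : Z -> S = {0,1}, encoded as bool (false = 0, true = 1) *)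
Definition sgn (a : int) : bool := a != 0.

Record Q1CA (Sigma : Type) (R : realType) := MkQ1CA {
  st : finType;
  delta : st -> tapesym Sigma -> bool -> st -> cmove -> hmove -> R[i];
  q0 : st;
  Qacc : {set st};
  Qrej : {set st}
}.
Arguments st {Sigma R} _.
Arguments delta {Sigma R} _.
Arguments q0 {Sigma R} _.
Arguments Qacc {Sigma R} _.
Arguments Qrej {Sigma R} _.

Section Semantics.
Variables (Sigma : Type) (R : realType) (M : Q1CA Sigma R).

Definition W (al be : int) (q1 : st M) (s1 : tapesym Sigma) (b1 : bool)
    (q2 : st M) (s2 : tapesym Sigma) (b2 : bool) : R[i] :=
  \sum_(q' : st M) \sum_(c1 <- cmoves) \sum_(d1 <- hmoves)
    \sum_(c2 <- cmoves) \sum_(d2 <- hmoves |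
        (cval c2 - cval c1 == al) && (mu d2 - mu d1 == be))
      (delta M q1 s1 b1 q' c1 d1)^* * delta M q2 s2 b2 q' c2 d2.

Definition well_formed : Prop :=
  [/\ [disjoint Qacc M & Qrej M],
      (forall q1 q2 s b, W 0 0 q1 s b q2 s b = (q1 == q2)%:R),
      (forall q1 q2 s1 s2 b be, be \in [:: 1; 2] -> W 0 be q1 s1 b q2 s2 b = 0),
      (forall q1 q2 s b1 b2 al, al \in [:: 1; 2] -> W al 0 q1 s b1 q2 s b2 = 0) &
      (forall q1 q2 s1 s2 b1 b2 al be, al \in [:: 1; 2] ->
          be \in [:: -2; -1; 1; 2] -> W al be q1 s1 b1 q2 s2 b2 = 0)].

Definition is_2R1CA : Prop :=
  forall q s b q' c d, delta M q s b q' c d = 0 \/ delta M q s b q' c d = 1.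

Variable x : seq Sigma.
Let n := size x.

Definition wx (b : 'I_n.+2) : tapesym Sigma :=
  if val b == 0%N then Cent
  else match onth x (val b).-1 with Some s => Sym s | None => Dollar end.

(* new head position b + mu(d) modulo n+2 *)
Definition newpos (b : 'I_n.+2) (d : hmove) : nat :=
  match d with
  | HL => (val b + n.+1) %% n.+2
  | HN => val b
  | HR => (val b).+1 %% n.+2
  end.

(* (unnormalized) state vectors over configurations (q, a, b) *)
Definition qstate := st M -> int -> 'I_n.+2 -> R[i].

(* U_x psi, written coordinatewise: the coefficient of |q',a',b'> *)
Definition Ux (psi : qstate) : qstate := fun q' a' b' =>
  \sum_(q : st M) \sum_(c <- cmoves) \sum_(d <- hmoves)
    \sum_(b : 'I_n.+2 | newpos b d == val b')
      psi q (a' - cval c) b * delta M q (wx b) (sgn (a' - cval c)) q' c d.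

Definition psi0 : qstate := fun q a b =>
  ((q == q0 M) && (a == 0) && (val b == 0%N))%:R.

(* unnormalized state after t steps conditioned on not having halted *)
Fixpoint run (t : nat) : qstate :=
  match t with
  | 0 => psi0
  | t.+1 => fun q a b =>
      if (q \in Qacc M) || (q \in Qrej M) then 0 else Ux (run t) q a b
  end.

Definition sqnorm (z : R[i]) : R := (complex.Re z) ^+ 2 + (complex.Im z) ^+ 2.

Definition proj_prob (S : {set st M}) (phi : qstate) : \bar R :=
  (\esum_(a in [set: int]) (\sum_(q in S) \sum_(b : 'I_n.+2) sqnorm (phi q a b))%:E)%E.

(* probability that the outcome at step t+1 is accept / reject *)
Definition acc_step (t : nat) : \bar R := proj_prob (Qacc M) (Ux (run t)).
Definition rej_step (t : nat) : \bar R := proj_prob (Qrej M) (Ux (run t)).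

Definition acc_prob : \bar R := (\sum_(0 <= t <oo) acc_step t)%E.
Definition rej_prob : \bar R := (\sum_(0 <= t <oo) rej_step t)%E.

End Semantics.

(* The automaton is deterministic and reversible: every column of its
   transition table is a permutation of the states, and the counter and head
   moves depend only on the target state. Hence U_x maps configurations to
   configurations, well-formedness reduces to injectivity of the table, and
   the computation follows a single configuration, accepting or rejecting
   with probability 1 according to the halting state it reaches.
   On an input of length N the machine first sweeps to the right end marker,
   loading N + 2 into the counter. A round starting there with counter n + 2
   walks left consuming two counter units per cell, and stops h cells from
   the end, where n = 2h or n = 2h + 1, knowing the parity of n. If n is odd
   it steps one cell right and accepts iff that cell holds the end marker,
   i.e. iff n = 1; if n = 2h > 0 it sweeps right again, loading h + 2, and
   starts the next round. *)

From HB Require Import structures.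
From mathcomp Require Import all_boot all_order all_algebra.
From mathcomp Require Import complex.
From mathcomp Require Import all_classical all_reals all_analysis.
From mathcomp Require Import zify.
Set Implicit Arguments. Unset Strict Implicit.
Import Order.TTheory GRing.Theory Num.Theory.
Local Open Scope ring_scope.

Lemma cval_inj : injective cval. Proof. by case; case. Qed.
HB.instance Definition _ := Equality.copy cmove (inj_type cval_inj).
Lemma mu_inj : injective mu. Proof. by case; case. Qed.
HB.instance Definition _ := Equality.copy hmove (inj_type mu_inj).

Lemma mem_cmoves c : c \in cmoves. Proof. by case: c. Qed.
Lemma mem_hmoves d : d \in hmoves. Proof. by case: d. Qed.

Lemma big_seq_pick (T : eqType) (V : Type) (idx : V) (op : Monoid.com_law idx)
    (s : seq T) (e : T) (F : T -> V) :
  e \in s -> uniq s -> (forall c, c != e -> F c = idx) -> \big[op/idx]_(c <- s) F c = F e.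
Proof. by move=> se us F0; rewrite (bigD1_seq e) //= big1 ?Monoid.mulm1. Qed.
Arguments big_seq_pick {T V idx op s} e {F}.

Lemma eseries_single (R : realType) (f : nat -> \bar R) (T : nat) :
  (forall k, k != T -> f k = 0%E) -> (0 <= f T)%E -> (\sum_(0 <= k <oo) f k = f T)%E.
Proof.
move=> f0 fT; rewrite (@nneseriesD1 _ _ T xpredT) //=; last first.
  by move=> k _; have [->|/f0->] := eqVneq k T.
by rewrite eseries0 ?adde0 // => k _ /f0.
Qed.

Lemma onth_unit (s : seq unit) i : onth s i = if (i < size s)%N then Some tt else None.
Proof. by elim: s i => [|[] s IH] [|i] //=. Qed.

Lemma PoszD1 m : Posz m + 1 = Posz m.+1. Proof. by rewrite -addn1 PoszD. Qed.
Lemma PoszSB1 m : Posz m.+1 - 1 = Posz m. Proof. by rewrite -addn1 PoszD addrK. Qed.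

Definition pow2 (n : nat) : Prop := exists e, n = (2 ^ e)%N.

Lemma pow2_double n : pow2 (2 * n) <-> pow2 n.
Proof.
split=> [[[|e] ne] | [e ->]]; last by exists e.+1; rewrite expnS.
- by rewrite expn0 in ne; lia.
- by exists e; rewrite expnS in ne; lia.
Qed.

Lemma pow2_odd n : pow2 (2 * n).+1 <-> n = 0%N.
Proof.
split=> [[[|e] ne] | ->]; last by exists 0%N.
- by rewrite expn0 in ne; lia.
- by rewrite expnS in ne; lia.
Qed.

Lemma pow2_0 : ~ pow2 0.
Proof. by case=> e; have := expn_gt0 2 e; lia. Qed.

Section DeterministicQ1CA.
Variables (Sigma : Type) (R : realType) (Q : finType).
Variables (next : Q -> tapesym Sigma -> bool -> Q).
Variables (cmove_of : Q -> cmove) (hmove_of : Q -> hmove).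
Variables (qinit : Q) (Acc Rej : {set Q}).

Definition det_delta (q : Q) (s : tapesym Sigma) (b : bool) (q' : Q)
    (c : cmove) (d : hmove) : R[i] :=
  ((next q s b == q') && (c == cmove_of q') && (d == hmove_of q'))%:R.

Definition det_Q1CA : Q1CA Sigma R := MkQ1CA det_delta qinit Acc Rej.
Local Notation M := det_Q1CA.

Lemma det_is_2R1CA : is_2R1CA M.
Proof. by move=> q s b q' c d; rewrite /= /det_delta; case: (_ && _); [right|left]. Qed.

Lemma W_det al be q1 s1 b1 q2 s2 b2 :
  W (M := M) al be q1 s1 b1 q2 s2 b2 =
  ((next q1 s1 b1 == next q2 s2 b2) && (al == 0) && (be == 0))%:R.
Proof.
set q' := next q1 s1 b1.
rewrite /W /= (big_seq_pick q') ?mem_index_enum ?index_enum_uniq //; last first.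
  move=> p /negbTE p_q'; do 4 rewrite big1 // => ? _.
  by rewrite /det_delta [_ == p]eq_sym p_q' conjC0 mul0r.
rewrite (big_seq_pick (cmove_of q')) ?mem_cmoves //; last first.
  move=> c /negbTE c_q'; do 3 rewrite big1 // => ? _.
  by rewrite /det_delta c_q' andbF conjC0 mul0r.
rewrite (big_seq_pick (hmove_of q')) ?mem_hmoves //; last first.
  move=> d /negbTE d_q'; do 2 rewrite big1 // => ? _.
  by rewrite /det_delta d_q' andbF conjC0 mul0r.
rewrite (big_seq_pick (cmove_of q')) ?mem_cmoves //; last first.
  move=> c /negbTE c_q'; rewrite big1 // => ? _.
  by rewrite /det_delta c_q' andbF mulr0.
rewrite big_mkcond (big_seq_pick (hmove_of q')) ?mem_hmoves //; last first.
  by move=> d /negbTE d_q'; rewrite /det_delta d_q' andbF mulr0 if_same.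
rewrite /det_delta !eqxx !subrr conjC1 mul1r [next q2 s2 b2 == _]eq_sym !andbT.
rewrite ![0 == _]eq_sym.
by case: (q' == _); case: (al == 0); case: (be == 0).
Qed.

Lemma det_well_formed :
  [disjoint Acc & Rej] -> (forall s b, injective (fun q => next q s b)) -> well_formed M.
Proof.
move=> AR next_inj; split => //.
- by move=> q1 q2 s b; rewrite W_det (inj_eq (next_inj s b)) !eqxx !andbT.
- by move=> q1 q2 s1 s2 b be; rewrite !inE W_det => /orP[]/eqP->; rewrite andbF.
- by move=> q1 q2 s b1 b2 al; rewrite !inE W_det => /orP[]/eqP->; rewrite andbF.
- by move=> q1 q2 s1 s2 b1 b2 al be; rewrite !inE W_det => /orP[]/eqP->; rewrite andbF.
Qed.

Variable x : seq Sigma.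
Local Notation N := (size x).

Definition config := (Q * int * 'I_N.+2)%type.

Definition basis (c : config) : qstate M x :=
  fun q a b => ((q == c.1.1) && (a == c.1.2) && (b == c.2))%:R.

Definition det_step (c : config) : config :=
  let: (q, a, b) := c in
  let q' := next q (wx b) (sgn a) in
  (q', a + cval (cmove_of q'), inord (newpos b (hmove_of q'))).

Lemma newpos_lt (b : 'I_N.+2) d : (newpos b d < N.+2)%N.
Proof. by case: d; rewrite /newpos ?ltn_pmod ?ltn_ord. Qed.

Lemma Ux_basis c : Ux (basis c) = basis (det_step c).
Proof.
case: c => [[p a] b]; apply/funext => q'; apply/funext => a'; apply/funext => b'.
rewrite /Ux /basis /= (big_seq_pick p) ?mem_index_enum ?index_enum_uniq //; last first.
  move=> q /negbTE q_p; do 3 rewrite big1 // => ? _.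
  by rewrite q_p mul0r.
rewrite (big_seq_pick (cmove_of q')) ?mem_cmoves //; last first.
  move=> c /negbTE c_q'; do 2 rewrite big1 // => ? _.
  by rewrite /det_delta c_q' andbF mulr0.
rewrite (big_seq_pick (hmove_of q')) ?mem_hmoves //; last first.
  by move=> d /negbTE d_q'; rewrite big1 // => ? _; rewrite /det_delta d_q' andbF mulr0.
rewrite big_mkcond (big_seq_pick b) ?mem_index_enum ?index_enum_uniq //; last first.
  by move=> b'' /negbTE b_b; rewrite b_b andbF mul0r if_same.
rewrite /det_delta !eqxx !andbT /=.
have [a'E | a'_ne] := eqVneq (a' - cval (cmove_of q')) a; last first.
  rewrite mul0r if_same; case: eqP => //= <-.
  by rewrite -subr_eq (negbTE a'_ne).
rewrite a'E mul1r.
have [<- | _] := eqVneq q' (next p (wx b) (sgn a)); last by rewrite if_same.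
rewrite -a'E subrK !eqxx -val_eqE /= inordK ?newpos_lt //.
by rewrite eq_sym; case: eqP.
Qed.

Definition halting (q : Q) : bool := (q \in Acc) || (q \in Rej).

Fixpoint exec (k : nat) (c : config) : option config :=
  if k is k'.+1 then
    if exec k' c is Some d then
      if halting (det_step d).1.1 then None else Some (det_step d)
    else None
  else Some c.

Definition config0 : config := (qinit, 0, ord0).

Definition state_of (o : option config) : qstate M x :=
  if o is Some c then basis c else fun _ _ _ => 0.

Lemma Ux_zero : Ux (M := M) (x := x) (fun _ _ _ => 0) = fun _ _ _ => 0.
Proof.
apply/funext => q'; apply/funext => a'; apply/funext => b'.
by rewrite /Ux big1 // => q _; do 3 rewrite big1 // => ? _; rewrite mul0r.
Qed.

Lemma run_exec t : run (M := M) (x := x) t = state_of (exec t config0).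
Proof.
elim: t => [|t IH].
  by apply/funext => q; apply/funext => a; apply/funext => b.
apply/funext => q; apply/funext => a; apply/funext => b.
rewrite /= IH; case: (exec t config0) => [d|] /=; last by rewrite Ux_zero if_same.
rewrite Ux_basis -/(halting q); case: ifP => hq; case: ifP => //= hd.
all: by rewrite /basis; case: eqP => //= q_d; rewrite -q_d hq in hd.
Qed.

Lemma exec_step k c d e :
  exec k c = Some d -> det_step d = e -> ~~ halting e.1.1 -> exec k.+1 c = Some e.
Proof. by move=> /= -> <- /negbTE ->. Qed.

Lemma exec_SomeS k c e : exec k.+1 c = Some e ->
  exists2 d, exec k c = Some d & ~~ halting (det_step d).1.1 /\ e = det_step d.
Proof.
by rewrite /=; case: (exec k c) => // d; case: ifP => // hd [<-]; exists d; rewrite ?hd.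
Qed.

Lemma exec_cat k1 k2 c d e :
  exec k1 c = Some d -> exec k2 d = Some e -> exec (k1 + k2) c = Some e.
Proof.
move=> cd; elim: k2 e => [|k2 IH] e; first by rewrite addn0 => -[<-].
by case/exec_SomeS=> d' /IH d'e [hd ->]; rewrite addnS; apply: exec_step d'e _ hd.
Qed.

Lemma exec_le j k c e : (j <= k)%N -> exec k c = Some e -> exists d, exec j c = Some d.
Proof.
move=> /subnK <-; elim: (k - j)%N e => [|m IH] e; first by exists e.
by rewrite addSn => /exec_SomeS [d /IH].
Qed.

Lemma exec_after T c d : exec T c = Some d -> halting (det_step d).1.1 ->
  forall t, (T < t)%N -> exec t c = None.
Proof.
move=> cd hd t /subnK <-; elim: (t - T.+1)%N => [|m IH]; first by rewrite /= cd hd.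
by rewrite addSn /= IH.
Qed.

Lemma sqnorm_nat (b : bool) : sqnorm (b%:R : R[i]) = b%:R.
Proof. by case: b; rewrite /sqnorm /= expr0n /= ?expr1n addr0. Qed.

Lemma proj_prob_basis S c :
  proj_prob (M := M) S (basis c) = ((c.1.1 \in S)%:R : R)%:E.
Proof.
rewrite /proj_prob.
transitivity (\esum_(a in [set c.1.2]) ((c.1.1 \in S)%:R : R)%:E); last first.
  by rewrite esum_set1 // lee_fin; case: (_ \in S).
rewrite [RHS]esum_mkcond; apply: eq_esum => a _.
rewrite big_mkcond (big_seq_pick c.1.1) ?mem_index_enum ?index_enum_uniq //; last first.
  by move=> q /negbTE q_c; rewrite big1 ?if_same // => b _; rewrite /basis q_c sqnorm_nat.
rewrite (big_seq_pick c.2) ?mem_index_enum ?index_enum_uniq //; last first.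
  by move=> b /negbTE b_c; rewrite /basis b_c !andbF sqnorm_nat.
rewrite /basis !eqxx !andbT sqnorm_nat in_set1.
by case: (_ \in S); case: (a == _).
Qed.

Lemma proj_prob_zero S : proj_prob (M := M) (x := x) S (fun _ _ _ => 0) = 0%E.
Proof.
rewrite /proj_prob esum1 // => a _; rewrite big1 // => q _; rewrite big1 // => b _.
exact: (sqnorm_nat false).
Qed.

Lemma halting_series (S : {set Q}) T d : (forall q, q \in S -> halting q) ->
  exec T config0 = Some d -> halting (det_step d).1.1 ->
  (\sum_(0 <= t <oo) proj_prob (M := M) S (Ux (run (x := x) t)))%E
   = (((det_step d).1.1 \in S)%:R : R)%:E.
Proof.
move=> S_halt c0d hd.
have at_T : proj_prob (M := M) S (Ux (run (x := x) T)) = (((det_step d).1.1 \in S)%:R : R)%:E.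
  by rewrite run_exec c0d /= Ux_basis proj_prob_basis.
rewrite (@eseries_single _ _ T) ?at_T ?lee_fin ?ler0n // => t tT.
rewrite run_exec; case: ltngtP tT => // t_T _.
- have [e /exec_SomeS [d' -> [hd' _]]] := @exec_le t.+1 T _ _ t_T c0d.
  by rewrite /= Ux_basis proj_prob_basis; case: (boolP (_ \in S)) => // /S_halt; rewrite (negbTE hd').
- by rewrite (@exec_after T _ _ c0d hd t t_T) /= Ux_zero proj_prob_zero.
Qed.

Lemma acc_prob_det T d : exec T config0 = Some d -> halting (det_step d).1.1 ->
  acc_prob M x = (((det_step d).1.1 \in Acc)%:R : R)%:E.
Proof. by move=> c0d hd; apply: halting_series c0d hd => q qA; rewrite /halting qA. Qed.

Lemma rej_prob_det T d : exec T config0 = Some d -> halting (det_step d).1.1 ->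
  rej_prob M x = (((det_step d).1.1 \in Rej)%:R : R)%:E.
Proof. by move=> c0d hd; apply: halting_series c0d hd => q qR; rewrite /halting qR orbT. Qed.

End DeterministicQ1CA.

Inductive state := Start | Sweep | Turn | Halve0 | Halve1 | Verify | Accept | Reject.

Definition state_to_nat (q : state) : nat :=
  match q with
  | Start => 0 | Sweep => 1 | Turn => 2 | Halve0 => 3
  | Halve1 => 4 | Verify => 5 | Accept => 6 | Reject => 7
  end.
Definition nat_to_state (n : nat) : option state :=
  nth None [:: Some Start; Some Sweep; Some Turn; Some Halve0;
               Some Halve1; Some Verify; Some Accept; Some Reject] n.
Lemma state_to_natK : pcancel state_to_nat nat_to_state. Proof. by case. Qed.
HB.instance Definition _ := Countable.copy state (pcan_type state_to_natK).
Lemma state_enumP : Finite.axiom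
  [:: Start; Sweep; Turn; Halve0; Halve1; Verify; Accept; Reject].
Proof. by case. Qed.
HB.instance Definition _ := @fintype.isFinite.Build state _ state_enumP.

(* Each column (symbol, counter sign) of the table is a permutation of the
   states; the entries not used by the computation below only complete it. *)
Definition next_state (q : state) (s : tapesym unit) (nz : bool) : state :=
  match s, nz, q with
  | Cent, false, Start => Sweep
  | Cent, false, Sweep => Start
  | Cent, false, Turn => Turn
  | Cent, false, Halve0 => Reject
  | Cent, false, Halve1 => Halve0
  | Cent, false, Verify => Halve1
  | Cent, false, Accept => Verify
  | Cent, false, Reject => Accept
  | Cent, true, Halve0 => Halve1
  | Cent, true, Halve1 => Halve0
  | Cent, true, q => q
  | Sym _, false, Start => Start
  | Sym _, false, Sweep => Turn
  | Sym _, false, Turn => Halve0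
  | Sym _, false, Halve0 => Sweep
  | Sym _, false, Halve1 => Verify
  | Sym _, false, Verify => Reject
  | Sym _, false, Accept => Halve1
  | Sym _, false, Reject => Accept
  | Sym _, true, Halve0 => Halve1
  | Sym _, true, Halve1 => Halve0
  | Sym _, true, q => q
  | Dollar, false, Verify => Accept
  | Dollar, false, Accept => Verify
  | Dollar, false, q => q
  | Dollar, true, Sweep => Turn
  | Dollar, true, Turn => Halve1
  | Dollar, true, Halve0 => Sweep
  | Dollar, true, Halve1 => Halve0
  | Dollar, true, q => q
  end.

Definition counter_move (q : state) : cmove :=
  match q with Sweep | Turn => CP | Halve0 | Halve1 => CM | _ => C0 end.

Definition head_move (q : state) : hmove :=
  match q with Sweep | Verify => HR | Halve0 => HL | _ => HN end.

Lemma next_state_inj s nz : injective (fun q => next_state q s nz).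
Proof.
move=> q1 q2 /eqP; apply: contraTeq.
by case: q1; case: q2; case: s => [||[]]; case: nz.
Qed.

Definition power2_Q1CA (R : realType) : Q1CA unit R :=
  @det_Q1CA unit R state next_state counter_move head_move Start [set Accept] [set Reject].

Lemma power2_well_formed (R : realType) : well_formed (power2_Q1CA R).
Proof.
apply: det_well_formed; last exact: next_state_inj.
by rewrite disjoints1 inE.
Qed.

Lemma power2_is_2R1CA (R : realType) : is_2R1CA (power2_Q1CA R).
Proof. exact: det_is_2R1CA. Qed.

Arguments newpos : simpl never.
Arguments wx : simpl never.

Section Trajectory.
Variable x : seq unit.
Local Notation N := (size x).
Local Notation step := (@det_step _ _ next_state counter_move head_move x).
Local Notation exec := (@exec _ _ next_state counter_move head_move [set Accept] [set Reject] x).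

Definition conf (q : state) (m p : nat) : config state x := (q, Posz m, inord p).

Lemma wx_inord p : (p < N.+2)%N -> wx (inord p : 'I_N.+2) =
  if p == 0%N then Cent else if (p <= N)%N then Sym tt else Dollar.
Proof.
move=> hp; rewrite /wx /= inordK //; case: p hp => //= p hp.
by rewrite onth_unit; case: ifP.
Qed.

Lemma wx_cent : wx (inord 0 : 'I_N.+2) = Cent.
Proof. by rewrite wx_inord. Qed.
Lemma wx_sym p : (0 < p <= N)%N -> wx (inord p : 'I_N.+2) = Sym tt.
Proof. by move=> hp; rewrite wx_inord; [case: p hp => //= p -> | lia]. Qed.
Lemma wx_dollar : wx (inord N.+1 : 'I_N.+2) = Dollar.
Proof. by rewrite wx_inord // ltnn. Qed.

Lemma newpos_right p : (p <= N)%N -> newpos (inord p : 'I_N.+2) HR = p.+1.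
Proof. by move=> hp; rewrite /newpos /= inordK ?modn_small //; lia. Qed.
Lemma newpos_left p : (0 < p <= N.+1)%N -> newpos (inord p : 'I_N.+2) HL = p.-1.
Proof.
case: p => // p hp; rewrite /newpos /= inordK; last by lia.
rewrite (_ : (p.+1 + N.+1 = p + N.+2)%N) ?modnDr ?modn_small //; lia.
Qed.
Lemma newpos_stay p : (p < N.+2)%N -> newpos (inord p : 'I_N.+2) HN = p.
Proof. by move=> hp; rewrite /newpos /= inordK. Qed.

Lemma step_start : step (conf Start 0 0) = conf Sweep 1 1.
Proof. by rewrite /det_step /conf /= wx_cent /= newpos_right. Qed.

Lemma step_sweep m p : (0 < p <= N)%N -> step (conf Sweep m.+1 p) = conf Sweep m.+2 p.+1.
Proof. by move=> hp; rewrite /det_step /conf /= wx_sym //= PoszD1 newpos_right //; lia. Qed.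

Lemma step_sweep_dollar m : step (conf Sweep m.+1 N.+1) = conf Turn m.+2 N.+1.
Proof. by rewrite /det_step /conf /= wx_dollar /= PoszD1 newpos_stay. Qed.

Lemma step_turn m : step (conf Turn m.+1 N.+1) = conf Halve1 m N.+1.
Proof. by rewrite /det_step /conf /= wx_dollar /= PoszSB1 newpos_stay. Qed.

Lemma step_halve0 m p : (0 < p <= N)%N -> step (conf Halve0 m.+1 p) = conf Halve1 m p.
Proof. by move=> hp; rewrite /det_step /conf /= wx_sym //= PoszSB1 newpos_stay //; lia. Qed.

Lemma step_halve1 m p : (0 < p <= N.+1)%N -> step (conf Halve1 m.+1 p) = conf Halve0 m p.-1.
Proof.
move=> hp; rewrite /det_step /conf /=.
have -> : next_state Halve1 (wx (inord p : 'I_N.+2)) (sgn (Posz m.+1)) = Halve0.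
  by rewrite wx_inord; [case: (p == 0%N) => //; case: (p <= N)%N | lia].
by rewrite /= PoszSB1 newpos_left.
Qed.

Lemma step_halve0_even p : (0 < p <= N)%N -> step (conf Halve0 0 p) = conf Sweep 1 p.+1.
Proof. by move=> hp; rewrite /det_step /conf /= wx_sym //= newpos_right //; lia. Qed.

Lemma step_halve0_cent : (step (conf Halve0 0 0)).1.1 = Reject.
Proof. by rewrite /det_step /conf /= wx_cent. Qed.

Lemma step_halve1_odd p : (0 < p <= N)%N -> step (conf Halve1 0 p) = conf Verify 0 p.+1.
Proof. by move=> hp; rewrite /det_step /conf /= wx_sym //= newpos_right //; lia. Qed.

Lemma step_verify_dollar : (step (conf Verify 0 N.+1)).1.1 = Accept.
Proof. by rewrite /det_step /conf /= wx_dollar. Qed.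

Lemma step_verify_sym p : (0 < p <= N)%N -> (step (conf Verify 0 p)).1.1 = Reject.
Proof. by move=> hp; rewrite /det_step /conf /= wx_sym. Qed.

Lemma exec_step_live k c d e : exec k c = Some d -> step d = e ->
  e.1.1 \notin [:: Accept; Reject] -> exec k.+1 c = Some e.
Proof. by move=> cd de; rewrite !inE => ne; apply: exec_step cd de _; rewrite /halting !inE. Qed.

Lemma exec_sweep k m p : (0 < p)%N -> (p + k <= N.+1)%N ->
  exec k (conf Sweep m.+1 p) = Some (conf Sweep (m.+1 + k) (p + k)).
Proof.
move=> hp; elim: k => [|k IH] hk; first by rewrite !addn0.
apply: exec_step_live (IH _) _ _; [lia | | by []].
by rewrite addSn step_sweep ?addnS //; lia.
Qed.

Lemma exec_halve j m : (2 * j <= m)%N -> (j <= N.+1)%N ->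
  exec (2 * j) (conf Turn m N.+1) =
  Some (conf (if j == 0%N then Turn else Halve0) (m - 2 * j) (N.+1 - j)).
Proof.
elim: j => [|j IH] hm hj; first by rewrite muln0 !subn0.
rewrite (_ : (2 * j.+1 = (2 * j).+2)%N); last by lia.
have first_step : step (conf (if j == 0%N then Turn else Halve0) (m - 2 * j) (N.+1 - j)) =
    conf Halve1 (m - (2 * j).+2).+1 (N.+1 - j).
  rewrite (_ : (m - 2 * j = (m - (2 * j).+2).+2)%N); last by lia.
  case: eqP => [->|j0]; first by rewrite subn0 step_turn.
  by rewrite step_halve0 //; lia.
apply: exec_step_live (exec_step_live (IH _ _) first_step isT) _ _; [lia | lia | | by []].
by rewrite step_halve1 ?subnS //; lia.
Qed.

Lemma exec_init : exec N.+2 (conf Start 0 0) = Some (conf Turn N.+2 N.+1).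
Proof.
have loaded : exec 1 (conf Start 0 0) = Some (conf Sweep 1 1).
  exact: exec_step_live step_start isT.
have := exec_cat loaded (@exec_sweep N 0 1 isT (leqnn _)).
by rewrite add1n => swept; apply: exec_step_live swept (step_sweep_dollar N) isT.
Qed.

Lemma exec_round_zero : N = 0%N -> exec 2 (conf Turn 2 N.+1) = Some (conf Halve0 0 0).
Proof. by move=> N0; rewrite (@exec_halve 1) //= N0. Qed.

Lemma exec_round_odd h : ((2 * h).+1 <= N)%N ->
  exists k d, exec k (conf Turn (2 * h).+3 N.+1) = Some d /\
              (step d).1.1 = if h == 0%N then Accept else Reject.
Proof.
move=> hN; have pos : (0 < N - h <= N)%N by lia.
have halved : exec (2 * h.+1) (conf Turn (2 * h).+3 N.+1) = Some (conf Halve0 1 (N - h)).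
  by rewrite exec_halve /=; [congr (Some (conf _ _ _)); lia | lia | lia].
have odd := exec_step_live halved (step_halve0 0 pos) isT.
have verify := exec_step_live odd (step_halve1_odd pos) isT.
exists (2 * h.+1).+2, (conf Verify 0 (N - h).+1); split => //.
have [->|h0] := eqVneq h 0%N; first by rewrite subn0 step_verify_dollar.
by rewrite step_verify_sym //; lia.
Qed.

Lemma exec_round_even h : (0 < h)%N -> (2 * h <= N)%N ->
  exists k, exec k (conf Turn (2 * h).+2 N.+1) = Some (conf Turn h.+2 N.+1).
Proof.
move=> h0 hN; have pos : (0 < N - h <= N)%N by lia.
have halved : exec (2 * h.+1) (conf Turn (2 * h).+2 N.+1) = Some (conf Halve0 0 (N - h)).
  by rewrite exec_halve /=; [congr (Some (conf _ _ _)); lia | lia | lia].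
have even := exec_step_live halved (step_halve0_even pos) isT.
have := exec_cat even (@exec_sweep h 0 (N - h).+1 isT (ltac:(lia))).
rewrite (_ : ((N - h).+1 + h = N.+1)%N) ?add1n; last by lia.
by move=> swept; eexists; apply: exec_step_live swept (step_sweep_dollar h) isT.
Qed.

Lemma exec_verdict n : (n <= N)%N -> (0 < n)%N || (N == 0%N) ->
  exists k d, exec k (conf Turn n.+2 N.+1) = Some d /\
    ((step d).1.1 = Accept /\ pow2 n \/ (step d).1.1 = Reject /\ ~ pow2 n).
Proof.
elim/ltn_ind: n => n IH nN n_pos.
have [h [n_odd|n_even]] : exists h, n = (2 * h).+1 \/ n = (2 * h)%N.
  by exists n./2; have := odd_double_half n; rewrite -muln2; case: (odd n) => /=; lia.
all: subst n.
- have [k [d [nd verdict]]] := exec_round_odd (ltac:(lia) : ((2 * h).+1 <= N)%N).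
  exists k, d; split => //; rewrite verdict pow2_odd.
  by case: eqP => h0; [left | right].
- have [h0|h0] := eqVneq h 0%N.
    move: n_pos; rewrite h0 muln0 /= => /eqP N0.
    exists 2, (conf Halve0 0 0); split; first exact: exec_round_zero.
    by right; split; [exact: step_halve0_cent | exact: pow2_0].
  have [k1 halved] := exec_round_even (ltac:(lia) : (0 < h)%N) (ltac:(lia) : (2 * h <= N)%N).
  have [k2 [d [hd verdict]]] := IH h (ltac:(lia)) (ltac:(lia)) (ltac:(lia)).
  exists (k1 + k2)%N, d; rewrite pow2_double; split; first exact: exec_cat halved hd.
  exact: verdict.
Qed.

Lemma exec_power2 : exists T d, exec T (config0 Start x) = Some d /\
  ((step d).1.1 = Accept /\ pow2 N \/ (step d).1.1 = Reject /\ ~ pow2 N).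
Proof.
have N_pos : (0 < N)%N || (N == 0%N) by case: N.
have [k [d [run_d verdict]]] := exec_verdict (leqnn N) N_pos.
have init : config0 Start x = conf Start 0 0 by congr (_, _); apply/val_inj; rewrite /= inordK.
by exists (N.+2 + k)%N, d; rewrite init (exec_cat exec_init run_d).
Qed.

End Trajectory.

Theorem lemma16 (R : realType) :
  exists M : Q1CA unit R,
    well_formed M /\ is_2R1CA M /\
    forall x : seq unit,
      ((exists k : nat, size x = (2 ^ k)%N) -> acc_prob M x = 1%E) /\
      (~ (exists k : nat, size x = (2 ^ k)%N) -> rej_prob M x = 1%E).
Proof.
exists (power2_Q1CA R); split; first exact: power2_well_formed.
split=> [|x]; first exact: power2_is_2R1CA.
have [T [d [run_d verdict]]] := exec_power2 x.
have halts : halting [set Accept] [set Reject] (det_step next_state counter_move head_move d).1.1.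
  by rewrite /halting !inE; case: verdict => -[-> _].
split=> x_pow2.
- case: verdict => [[accept _] | [_ /(_ x_pow2) []]].
  by rewrite (acc_prob_det R run_d halts) accept inE.
- case: verdict => [[_ /x_pow2 []] | [reject _]].
  by rewrite (rej_prob_det R run_d halts) reject inE.
Qed.
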